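(* Let $P^1,\dots,P^4\in\mathbb{R}^n$ be in general position, let $Q^0$ be the equidistant point from $P^1,\dots,P^4$ with barycentric coordinate $\boldsymbol\lambda^0$, and suppose $\lambda^0_1<0$, $\lambda^0_2,\lambda^0_3,\lambda^0_4\ge0$. Let $Q^1=\pi(Q^0|L(P^2,P^3,P^4))$ with barycentric coordinate $\boldsymbol\lambda^1$ about $P^1,\dots,P^4$, and suppose $\lambda^1_2\ge0$, $\lambda^1_3\ge0$, $\lambda^1_4\ge0$. Then the center of the smallest enclosing circle of $P^1,\dots,P^4$ is $Q^\ast=Q^1$ and its radius is $d^\ast=d(P^2,Q^1)$.
   Context: $d$ is the Euclidean distance. Points are in general position if $P^2-P^1,\dots,P^m-P^1$ are linearly independent. $L(S^1,\dots,S^r)$ is the affine subspace spanned by the points; $\pi(Q'|L)$ is the orthogonal projection onto the affine subspace $L$. The barycentric coordinate of $Q\in L(P^1,\dots,P^m)$ is the unique $\boldsymbol\lambda$ with $\sum_i\lambda_i=1$, $Q=\sum_i\lambda_iP^i$. The equidistant point is the unique $Q^0\in L(P^1,\dots,P^m)$ with all $d(P^i,Q^0)$ equal. The smallest enclosing circle has center $Q^\ast$ attaining $\min_Q\max_i d(P^i,Q)$ and radius $d^\ast$ equal to this minimum. *)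

From HB Require Import structures.
From mathcomp Require Import all_boot all_order all_algebra.
From mathcomp Require Import reals.
Set Implicit Arguments. Unset Strict Implicit. Unset Printing Implicit Defensive.
Import Order.TTheory GRing.Theory Num.Theory.
Local Open Scope ring_scope.

Definition dotv {R : realType} {n : nat} (u v : 'rV[R]_n) : R :=
  \sum_(k < n) u 0 k * v 0 k.
Definition dist {R : realType} {n : nat} (x y : 'rV[R]_n) : R :=
  Num.sqrt (dotv (x - y) (x - y)).

Definition gen_pos {R : realType} {n m : nat} (P : 'I_m.+1 -> 'rV[R]_n) : Prop :=
  row_free (\matrix_(i < m) (P (lift ord0 i) - P ord0)).

Definition is_bary {R : realType} {n m : nat} (S : 'I_m -> 'rV[R]_n)
  (lam : 'I_m -> R) (Q : 'rV[R]_n) : Prop :=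
  \sum_(i < m) lam i = 1 /\ Q = \sum_(i < m) lam i *: S i.

Definition in_aff {R : realType} {n m : nat} (S : 'I_m -> 'rV[R]_n)
  (Q : 'rV[R]_n) : Prop := exists lam, is_bary S lam Q.

Definition is_proj {R : realType} {n m : nat} (S : 'I_m -> 'rV[R]_n)
  (Q0 Q1 : 'rV[R]_n) : Prop :=
  in_aff S Q1 /\ forall X, in_aff S X -> dotv (Q0 - Q1) (X - Q1) = 0.

Definition maxdist {R : realType} {n m : nat} (P : 'I_m -> 'rV[R]_n)
  (Q : 'rV[R]_n) : R := \big[Num.max/0]_(i < m) dist (P i) Q.

Definition is_sec_center {R : realType} {n m : nat} (P : 'I_m -> 'rV[R]_n)
  (Q : 'rV[R]_n) : Prop := forall Q', maxdist P Q <= maxdist P Q'.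

(* indices: p1..p4 stand for the paper's indices 1..4 *)
Definition p1 : 'I_4 := @Ordinal 4 0 isT.
Definition p2 : 'I_4 := @Ordinal 4 1 isT.
Definition p3 : 'I_4 := @Ordinal 4 2 isT.
Definition p4 : 'I_4 := @Ordinal 4 3 isT.

Definition face1 {R : realType} {n : nat} (P : 'I_4 -> 'rV[R]_n) : 'I_3 -> 'rV[R]_n :=
  fun i => P (lift ord0 i).

(* Pythagoras shows that Q1 is equidistant from P^2, P^3, P^4, and that
   |Q0 - Q1|^2 = lam0_1 <Q0 - Q1, P^1 - Q1>; as lam0_1 < 0 this puts P^1 inside
   the sphere through P^2, P^3, P^4 centred at Q1.  General position forces
   lam1_1 = 0, so lam1 >= 0 writes Q1 as a convex combination of points at
   distance r = d(P^2, Q1) from it, and averaging |P^i - Q|^2 with the weights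
   lam1 gives r^2 + |Q - Q1|^2 <= (max_i d(P^i, Q))^2 for every Q. *)

From HB Require Import structures.
From mathcomp Require Import all_boot all_order all_algebra.
From mathcomp Require Import reals.
From mathcomp Require Import ring lra.
Set Implicit Arguments. Unset Strict Implicit. Unset Printing Implicit Defensive.
Import Order.TTheory GRing.Theory Num.Theory.
Local Open Scope ring_scope.

Section InnerProduct.
Context {R : realType} {n : nat}.
Implicit Types u v w x y : 'rV[R]_n.

Lemma dotvC u v : dotv u v = dotv v u.
Proof. by apply: eq_bigr => k _; rewrite mulrC. Qed.

Lemma dotvDl u v w : dotv (u + v) w = dotv u w + dotv v w.
Proof. by rewrite /dotv -big_split; apply: eq_bigr => k _; rewrite mxE mulrDl. Qed.

Lemma dotvNl u w : dotv (- u) w = - dotv u w.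
Proof. by rewrite /dotv -sumrN; apply: eq_bigr => k _; rewrite mxE mulNr. Qed.

Lemma dotvZl a u w : dotv (a *: u) w = a * dotv u w.
Proof. by rewrite /dotv mulr_sumr; apply: eq_bigr => k _; rewrite mxE mulrA. Qed.

Lemma dotv0l w : dotv 0 w = 0.
Proof. by rewrite /dotv big1 // => k _; rewrite mxE mul0r. Qed.

Lemma dotvNr u w : dotv w (- u) = - dotv w u.
Proof. by rewrite !(dotvC w) dotvNl. Qed.

Lemma dotvDr u v w : dotv w (u + v) = dotv w u + dotv w v.
Proof. by rewrite !(dotvC w) dotvDl. Qed.

Lemma dotv_suml m (F : 'I_m -> 'rV[R]_n) w :
  dotv (\sum_(i < m) F i) w = \sum_(i < m) dotv (F i) w.
Proof. exact: (big_morph (dotv^~ w) (fun u v => dotvDl u v w) (dotv0l w)). Qed.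

Lemma dotv_ge0 u : 0 <= dotv u u.
Proof. by apply: sumr_ge0 => k _; rewrite -expr2 sqr_ge0. Qed.

Lemma dotv_eq0 u : (dotv u u == 0) = (u == 0).
Proof.
apply/idP/eqP => [|->]; last by rewrite dotv0l.
rewrite psumr_eq0 => [/allP u0|k _]; last by rewrite -expr2 sqr_ge0.
apply/rowP => k; rewrite mxE.
by have /implyP/(_ isT) := u0 k (mem_index_enum k); rewrite -expr2 sqrf_eq0 => /eqP.
Qed.

Lemma dotv_sqD u v : dotv (u + v) (u + v) = dotv u u + dotv v v + 2 * dotv u v.
Proof. by rewrite dotvDl !dotvDr (dotvC v u); ring. Qed.

Lemma dist_sq x y : dist x y ^+ 2 = dotv (x - y) (x - y).
Proof. by rewrite sqr_sqrtr // dotv_ge0. Qed.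

Lemma dist_ge0 x y : 0 <= dist x y.
Proof. exact: sqrtr_ge0. Qed.

Lemma dist_eq0 x y : (dist x y == 0) = (x == y).
Proof. by rewrite -sqrf_eq0 dist_sq dotv_eq0 subr_eq0. Qed.

Lemma dist_eq_sqr x y x' y' : (dist x y == dist x' y') = (dist x y ^+ 2 == dist x' y' ^+ 2).
Proof. by rewrite eqrXn2 ?dist_ge0. Qed.

Lemma dist_le_sqr x y x' y' : (dist x y <= dist x' y') = (dist x y ^+ 2 <= dist x' y' ^+ 2).
Proof. by rewrite ler_sqr ?nnegrE ?dist_ge0. Qed.

End InnerProduct.

Section Barycentric.
Context {R : realType} {n : nat}.

Lemma in_aff_point m (S : 'I_m -> 'rV[R]_n) i : in_aff S (S i).
Proof.
exists (fun j => (j == i)%:R); split.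
  by rewrite (bigD1 i) //= eqxx big1 ?addr0 // => j /negPf ->.
by rewrite (bigD1 i) //= eqxx scale1r big1 ?addr0 // => j /negPf ->; rewrite scale0r.
Qed.

Lemma bary_subr m (S : 'I_m -> 'rV[R]_n) lam Q X :
  is_bary S lam Q -> Q - X = \sum_(i < m) lam i *: (S i - X).
Proof.
case=> s1 ->; under [RHS]eq_bigr do rewrite scalerBr.
by rewrite sumrB -scaler_suml s1 scale1r.
Qed.

Lemma gen_pos_bary_inj m (P : 'I_m.+1 -> 'rV[R]_n) lam lam' Q :
  gen_pos P -> is_bary P lam Q -> is_bary P lam' Q -> lam =1 lam'.
Proof.
move=> gp [s eQ] [s' eQ'].
pose d i := lam i - lam' i.
have d_sum : \sum_(i < m.+1) d i = 0 by rewrite sumrB s s' subrr.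
have d_comb : \sum_(i < m.+1) d i *: P i = 0.
  by under eq_bigr do rewrite scalerBl; rewrite sumrB -eQ -eQ' subrr.
rewrite !big_ord_recl in d_sum d_comb.
have d_lift j : d (lift ord0 j) = 0.
  pose v := \row_(k < m) d (lift ord0 k).
  suff /rowP/(_ j) : v = 0 by rewrite !mxE.
  apply: (row_free_inj gp); rewrite mul0mx mulmx_sum_row.
  under eq_bigr do rewrite rowK !mxE scalerBr.
  by rewrite sumrB -scaler_suml -(addr0_eq d_sum) -(addr0_eq d_comb) scaleNr subrr.
move=> i; apply/eqP; rewrite -subr_eq0; apply/eqP.
case: (unliftP ord0 i) => [j ->|->]; first exact: d_lift.
by move: d_sum; rewrite big1 ?addr0.
Qed.

Lemma gen_pos_bary_face0 m (P : 'I_m.+1 -> 'rV[R]_n) lam Q :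
  gen_pos P -> is_bary P lam Q -> in_aff (fun j => P (lift ord0 j)) Q ->
  lam ord0 = 0.
Proof.
move=> gp bQ [mu [s eQ]].
pose ext i := if unlift ord0 i is Some j then mu j else 0.
have bQ' : is_bary P ext Q.
  by split; rewrite big_ord_recl /ext unlift_none ?scale0r add0r;
    under eq_bigr do rewrite liftK.
by rewrite (gen_pos_bary_inj gp bQ bQ') /ext unlift_none.
Qed.

End Barycentric.

Section Projection.
Context {R : realType} {n : nat}.

Lemma proj_orthogonal m (S : 'I_m -> 'rV[R]_n) Q0 Q1 i :
  is_proj S Q0 Q1 -> dotv (Q0 - Q1) (S i - Q1) = 0.
Proof. by case=> _; apply; apply: in_aff_point. Qed.

Lemma proj_pythagoras m (S : 'I_m -> 'rV[R]_n) Q0 Q1 i :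
  is_proj S Q0 Q1 -> dist (S i) Q0 ^+ 2 = dist (S i) Q1 ^+ 2 + dist Q0 Q1 ^+ 2.
Proof.
move=> pr; rewrite !dist_sq.
have -> : S i - Q0 = (S i - Q1) - (Q0 - Q1) by rewrite opprB addrA subrK.
by rewrite dotv_sqD dotvNl dotvNr opprK dotvNr dotvC (proj_orthogonal i pr); ring.
Qed.

Lemma proj_equidistant m (S : 'I_m -> 'rV[R]_n) Q0 Q1 i j :
  is_proj S Q0 Q1 -> dist (S i) Q0 = dist (S j) Q0 -> dist (S i) Q1 = dist (S j) Q1.
Proof.
move=> pr eq0; apply/eqP; rewrite dist_eq_sqr; apply/eqP.
by have := proj_pythagoras i pr; have := proj_pythagoras j pr; rewrite eq0; lra.
Qed.

Lemma proj_face_residual m (P : 'I_m.+1 -> 'rV[R]_n) lam Q0 Q1 :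
  is_bary P lam Q0 -> is_proj (fun j => P (lift ord0 j)) Q0 Q1 ->
  dist Q0 Q1 ^+ 2 = lam ord0 * dotv (Q0 - Q1) (P ord0 - Q1).
Proof.
move=> bQ0 pr; rewrite dist_sq {1}(bary_subr Q1 bQ0) dotv_suml big_ord_recl.
rewrite big1 ?addr0 => [|j _]; first by rewrite dotvZl dotvC.
by rewrite dotvZl dotvC (proj_orthogonal j pr) mulr0.
Qed.

Lemma proj_face_vertex0 m (P : 'I_m.+1 -> 'rV[R]_n) lam Q0 Q1 j :
  is_bary P lam Q0 -> lam ord0 < 0 -> is_proj (fun k => P (lift ord0 k)) Q0 Q1 ->
  dist (P ord0) Q0 = dist (P (lift ord0 j)) Q0 ->
  dist (P ord0) Q1 <= dist (P (lift ord0 j)) Q1.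
Proof.
move=> bQ0 lam0_lt0 pr eq0.
have residual := proj_face_residual bQ0 pr.
have vertex0 : dist (P ord0) Q1 ^+ 2 = dist (P ord0) Q0 ^+ 2 - dist Q0 Q1 ^+ 2
    + 2 * dotv (Q0 - Q1) (P ord0 - Q1).
  rewrite !dist_sq.
  have -> : P ord0 - Q1 = (P ord0 - Q0) + (Q0 - Q1) by rewrite addrA subrK.
  by rewrite dotv_sqD (dotvDr (P ord0 - Q0)) (dotvC (Q0 - Q1) (P ord0 - Q0)); ring.
have := proj_pythagoras j pr; rewrite -eq0 => pyth.
rewrite dist_le_sqr vertex0 pyth.
have := sqr_ge0 (dist Q0 Q1); rewrite residual; nra.
Qed.

End Projection.

Section EnclosingBall.
Context {R : realType} {n : nat}.

Lemma maxdist_ge m (P : 'I_m -> 'rV[R]_n) Q i : dist (P i) Q <= maxdist P Q.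
Proof. by rewrite /maxdist (bigD1 i) //= le_max lexx. Qed.

Lemma maxdist_le m (P : 'I_m -> 'rV[R]_n) Q b :
  0 <= b -> (forall i, dist (P i) Q <= b) -> maxdist P Q <= b.
Proof.
move=> b_ge0 le_b; rewrite /maxdist; apply: (big_ind (fun x => x <= b)) => //.
by move=> x y hx hy; rewrite ge_max hx hy.
Qed.

Lemma maxdist_ge0 m (P : 'I_m -> 'rV[R]_n) Q : 0 <= maxdist P Q.
Proof.
rewrite /maxdist; apply: (big_ind (fun x => 0 <= x)) => // [x y hx _|i _].
  by rewrite le_max hx.
exact: dist_ge0.
Qed.

Lemma bary_sum_sqdist m (P : 'I_m -> 'rV[R]_n) lam C Q :
  is_bary P lam C ->
  \sum_(i < m) lam i * dist (P i) Q ^+ 2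
    = \sum_(i < m) lam i * dist (P i) C ^+ 2 + dist Q C ^+ 2.
Proof.
move=> bC; have [s1 _] := bC.
have centred : \sum_(i < m) lam i *: (P i - C) = 0 by rewrite -(bary_subr C bC) subrr.
transitivity (\sum_(i < m) (lam i * dist (P i) C ^+ 2 + lam i * dist Q C ^+ 2
    + 2 * dotv (lam i *: (P i - C)) (C - Q))).
  apply: eq_bigr => i _; rewrite !dist_sq.
  have -> : P i - Q = (P i - C) + (C - Q) by rewrite addrA subrK.
  by rewrite dotv_sqD dotvZl -(opprB Q C) dotvNl dotvNr opprK; ring.
rewrite !big_split /= -mulr_suml s1 -mulr_sumr -dotv_suml.
by rewrite centred dotv0l; ring.
Qed.

Lemma bary_sum_sqdist_le m (P : 'I_m -> 'rV[R]_n) lam Q :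
  (forall i, 0 <= lam i) -> \sum_(i < m) lam i = 1 ->
  \sum_(i < m) lam i * dist (P i) Q ^+ 2 <= maxdist P Q ^+ 2.
Proof.
move=> lam_ge0 s1; rewrite -[leRHS]mul1r -s1 mulr_suml.
apply: ler_sum => i _; apply: ler_wpM2l => //.
by rewrite ler_sqr ?nnegrE ?dist_ge0 ?maxdist_ge0 ?maxdist_ge.
Qed.

Lemma smallest_enclosing_ball m (P : 'I_m -> 'rV[R]_n) lam C r :
  is_bary P lam C -> (forall i, 0 <= lam i) -> 0 <= r ->
  (forall i, dist (P i) C <= r) -> (forall i, lam i != 0 -> dist (P i) C = r) ->
  (forall Q, is_sec_center P Q <-> Q = C) /\ maxdist P C = r.
Proof.
move=> bC lam_ge0 r_ge0 le_r eq_r; have [s1 _] := bC.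
have lower Q : r ^+ 2 + dist Q C ^+ 2 <= maxdist P Q ^+ 2.
  have <- : \sum_(i < m) lam i * dist (P i) C ^+ 2 = r ^+ 2.
    rewrite -[RHS]mul1r -s1 mulr_suml; apply: eq_bigr => i _.
    by have [->|/eq_r ->] := eqVneq (lam i) 0; rewrite ?mul0r.
  by rewrite -bary_sum_sqdist //; apply: bary_sum_sqdist_le.
have distCC : dist C C = 0 by apply/eqP; rewrite dist_eq0.
have maxC : maxdist P C = r.
  apply/le_anti; rewrite maxdist_le //= -ler_sqr ?nnegrE ?maxdist_ge0 //.
  by have := lower C; rewrite distCC expr0n addr0.
split=> // Q; split=> [sec_Q | -> Q']; last first.
  rewrite maxC -ler_sqr ?nnegrE ?maxdist_ge0 //.
  by apply: le_trans (lower Q'); rewrite lerDl sqr_ge0.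
apply/eqP; rewrite -dist_eq0 -sqrf_eq0 eq_le sqr_ge0 andbT.
have := lower Q; have := sec_Q C; rewrite maxC.
have := maxdist_ge0 P Q; nra.
Qed.

End EnclosingBall.

Lemma lift0_ord4 (j : 'I_3) : [\/ lift ord0 j = p2, lift ord0 j = p3 | lift ord0 j = p4].
Proof.
by case: j => [[|[|[|//]]] ?]; [apply: Or31 | apply: Or32 | apply: Or33]; apply: val_inj.
Qed.

Theorem theorem7 (R : realType) (n : nat) (P : 'I_4 -> 'rV[R]_n)
  (Q0 : 'rV[R]_n) (lam0 : 'I_4 -> R) (Q1 : 'rV[R]_n) (lam1 : 'I_4 -> R) :
  gen_pos P ->
  is_bary P lam0 Q0 ->
  (forall i j, dist (P i) Q0 = dist (P j) Q0) ->
  lam0 p1 < 0 -> 0 <= lam0 p2 -> 0 <= lam0 p3 -> 0 <= lam0 p4 ->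
  is_proj (face1 P) Q0 Q1 ->
  is_bary P lam1 Q1 ->
  0 <= lam1 p2 -> 0 <= lam1 p3 -> 0 <= lam1 p4 ->
  (forall Q, is_sec_center P Q <-> Q = Q1) /\ maxdist P Q1 = dist (P p2) Q1.
Proof.
move=> gp bQ0 eqd lam01_lt0 _ _ _ pr bQ1 lam12 lam13 lam14.
have p1E : p1 = ord0 by apply: val_inj.
have p2E : p2 = lift ord0 ord0 by apply: val_inj.
have lam1_0 : lam1 ord0 = 0 := gen_pos_bary_face0 gp bQ1 (proj1 pr).
have face_eq j : dist (P (lift ord0 j)) Q1 = dist (P p2) Q1.
  by rewrite p2E; apply: (proj_equidistant pr); apply: eqd.
apply: (smallest_enclosing_ball bQ1) => [i|||i].
- by case: (unliftP ord0 i) => [j ->|->]; [case: (lift0_ord4 j) => -> | rewrite lam1_0].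
- exact: dist_ge0.
- move=> i; case: (unliftP ord0 i) => [j ->|->]; first by rewrite face_eq.
  rewrite -(face_eq ord0); apply: (proj_face_vertex0 bQ0 _ pr); first by rewrite -p1E.
  exact: eqd.
- by case: (unliftP ord0 i) => [j ->|->]; [rewrite face_eq | rewrite lam1_0 eqxx].
Qed.
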